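(* Let $\mathcal N$ be a finite ground set, $f:2^{\mathcal N}\to\mathbb R$ monotone and submodular, $k\ge1$ an integer, and $O$ an optimal solution to $\max\{f(S):|S|\le k\}$. Consider the following algorithm: initialize $A\leftarrow\emptyset$; for each $u\in\mathcal N$ in turn, if $\Delta(u\mid A)\ge f(A)/k$ then $A\leftarrow A\cup\{u\}$; finally return $A'$, the set of the last $k$ elements added to $A$ (or all of $A$ if fewer than $k$ were added). Then $4f(A')\ge f(O)$.
   Context: $f$ is submodular if $f(T\cup\{x\})-f(T)\le f(S\cup\{x\})-f(S)$ for all $S\subseteq T\subseteq\mathcal N$, $x\notin T$; monotone if $f(S)\le f(T)$ for $S\subseteq T$. $\Delta(x\mid S)=f(S\cup\{x\})-f(S)$. *)

From mathcomp Require Import all_boot all_order all_algebra.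
Set Implicit Arguments. Unset Strict Implicit. Unset Printing Implicit Defensive.
Import Order.TTheory GRing.Theory Num.Theory.
Local Open Scope ring_scope.

Section Defs.
Variables (R : realFieldType) (T : finType).

Definition monotone_fn (f : {set T} -> R) : Prop :=
  forall S U : {set T}, S \subset U -> f S <= f U.

Definition submodular (f : {set T} -> R) : Prop :=
  forall (S U : {set T}) (x : T), S \subset U -> x \notin U ->
    f (x |: U) - f U <= f (x |: S) - f S.

Definition marg (f : {set T} -> R) (x : T) (S : {set T}) : R :=
  f (x |: S) - f S.

(* One step of the streaming algorithm; the state is the sequence of
   elements added so far, in order of addition. *)
Definition stream_step (f : {set T} -> R) (k : nat) (L : seq T) (u : T)
  : seq T :=
  let A := [set x in L] in
  if f A / k%:R <= marg f u A then rcons L u else L.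

Definition stream_added (f : {set T} -> R) (k : nat) (s : seq T) : seq T :=
  foldl (stream_step f k) [::] s.

Definition stream_output (f : {set T} -> R) (k : nat) (s : seq T)
  : {set T} :=
  let L := stream_added f k s in
  [set x in drop (size L - k) L].

End Defs.

From mathcomp Require Import all_boot all_order all_algebra.
From mathcomp Require Import lra.
Import Order.TTheory GRing.Theory Num.Theory.
Local Open Scope ring_scope.
Set Implicit Arguments.

(* Let L be the sequence of added elements, A its set, B the set of all but
   its last k elements and A' the set of the last k.  An element of O either
   lies in A or was rejected, and by submodularity its marginal gain on the
   final A is still at most f(A)/k; hence f(O) <= f(O u A) <= f(A) + |O| f(A)/k
   <= 2 f(A).
   Each of the last k additions gained at least f(B)/k, so f(A) - f(B) >= f(B),
   while submodularity gives f(A) - f(B) <= f(A').  Hence f(A) <= 2 f(A'). *)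

Lemma set_rcons (T : finType) (s : seq T) (u : T) :
  [set x in rcons s u] = u |: [set x in s].
Proof. by apply/setP=> y; rewrite !inE mem_rcons in_cons. Qed.

Lemma set_take_drop (T : finType) (j : nat) (s : seq T) :
  [set x in s] = [set x in drop j s] :|: [set x in take j s].
Proof.
by rewrite -{1}(cat_take_drop j s); apply/setP=> x; rewrite !inE mem_cat orbC.
Qed.

Lemma relative_growth (R : realFieldType) (a : nat -> R) (c : R) (j n : nat) :
  0 <= c -> 0 <= a j ->
  (forall i, (j <= i < j + n)%N -> a i * c <= a i.+1 - a i) ->
  n%:R * (a j * c) <= a (j + n)%N - a j.
Proof.
move=> c_ge0 aj_ge0; elim: n => [|n IH] step; first by rewrite addn0 subrr mul0r.
have {}IH : n%:R * (a j * c) <= a (j + n)%N - a j.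
  by apply: IH => i /andP[ji lti]; rewrite step // ji addnS ltnW ?ltnS.
have last_step : a (j + n)%N * c <= a (j + n).+1 - a (j + n)%N.
  by rewrite step // leq_addr addnS ltnS leqnn.
have : a j * c <= a (j + n)%N * c.
  by rewrite ler_wpM2r //; have := mulr_ge0 (ler0n R n) (mulr_ge0 aj_ge0 c_ge0); lra.
by rewrite addnS -addn1 natrD mulrDl mul1r; lra.
Qed.

Section Submodular.
Variables (R : realFieldType) (T : finType) (f : {set T} -> R).

Lemma marg_mem (x : T) (S : {set T}) : x \in S -> marg f x S = 0.
Proof. by move=> xS; rewrite /marg (setUidPr _) ?sub1set ?subrr. Qed.

Hypotheses (f_mono : monotone_fn f) (f_submod : submodular f).

(* Unlike [submodular], this also covers [x \in U], thanks to monotonicity. *)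
Lemma marg_antitone (x : T) (S U : {set T}) :
  S \subset U -> marg f x U <= marg f x S.
Proof.
move=> SU; have [xU | xNU] := boolP (x \in U); last exact: f_submod.
by rewrite marg_mem // /marg subr_ge0 f_mono // subsetUr.
Qed.

Lemma gain_setU_antitone (Y X Z : {set T}) :
  Z \subset X -> f (Y :|: X) - f X <= f (Y :|: Z) - f Z.
Proof.
move=> ZX; rewrite -(set_enum Y); elim: (enum Y) => [|y Q IH].
  by rewrite set_nil !set0U !subrr.
rewrite set_cons -!setUA.
have := marg_antitone y (setUS [set x in Q] ZX); rewrite /marg; lra.
Qed.

Lemma gain_setU_le_card (Y A : {set T}) (c : R) :
  (forall y, y \in Y -> marg f y A <= c) ->
  f (Y :|: A) - f A <= #|Y|%:R * c.
Proof.
move=> margY.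
suff gain_seq (Q : seq T) : {subset Q <= Y} ->
    f ([set x in Q] :|: A) - f A <= (size Q)%:R * c.
  by rewrite -{1}(set_enum Y) cardE; apply: gain_seq => y; rewrite mem_enum.
elim: Q => [|y Q IH] QY; first by rewrite set_nil set0U subrr mul0r.
rewrite set_cons -setUA /= -addn1 natrD mulrDl mul1r.
have /IH : {subset Q <= Y} by move=> x xQ; apply: QY; rewrite inE xQ orbT.
have := margY y (QY y (mem_head y Q)).
have := marg_antitone y (subsetUr [set x in Q] A); rewrite /marg; lra.
Qed.

End Submodular.

Section Stream.
Variables (R : realFieldType) (T : finType) (f : {set T} -> R) (k : nat).

Local Notation added := (stream_added f k).

Lemma stream_added_rcons (s : seq T) (u : T) :
  added (rcons s u) = stream_step f k (added s) u.
Proof. by rewrite /stream_added foldl_rcons. Qed.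

Lemma stream_added_gain (s : seq T) (i : nat) : (i < size (added s))%N ->
  f [set x in take i (added s)] / k%:R <=
  f [set x in take i.+1 (added s)] - f [set x in take i (added s)].
Proof.
elim/last_ind: s i => [//|s u IH] i.
rewrite stream_added_rcons /stream_step; case: ifP => [accept|_]; last exact: IH.
rewrite size_rcons ltnS leq_eqVlt => /predU1P[->|lt_i].
- rewrite -cats1 take_size_cat // take_oversize ?size_cat ?addn1 //.
  by rewrite cats1 set_rcons; exact: accept.
- by rewrite -cats1 (takel_cat _ (ltnW lt_i)) (takel_cat _ lt_i); exact: IH.
Qed.

Hypotheses (f_mono : monotone_fn f) (f_submod : submodular f).

Lemma stream_rejected_marg (s : seq T) (x : T) : x \in s -> x \notin added s ->
  marg f x [set y in added s] <= f [set y in added s] / k%:R.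
Proof.
elim/last_ind: s => [//|s u IH].
rewrite stream_added_rcons /stream_step mem_rcons in_cons.
case: ifP => [_|reject]; last first.
  by case/predU1P => [-> _|xs]; [apply: ltW; rewrite ltNge reject | exact: IH].
case/predU1P => [->|xs]; first by rewrite mem_rcons mem_head.
rewrite mem_rcons in_cons negb_or => /andP[_ xL]; rewrite set_rcons.
apply: le_trans (marg_antitone f_mono f_submod x (subsetUr _ _)) _.
apply: le_trans (IH xs xL) _.
by rewrite ler_wpM2r ?invr_ge0 ?ler0n ?f_mono ?subsetUr.
Qed.

Hypotheses (f_ge0 : forall S, 0 <= f S) (k_gt0 : (0 < k)%N).

Let natk_divK (x : R) : k%:R * (x / k%:R) = x.
Proof. by rewrite mulrC divfK // pnatr_eq0 -lt0n. Qed.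

Lemma stream_added_two_approx (s : seq T) (O : {set T}) :
  (forall x, x \in s) -> (#|O| <= k)%N ->
  f O <= 2%:R * f [set x in added s].
Proof.
move=> s_all O_le_k; set A := [set x in added s].
have margO x : x \in O -> marg f x A <= f A / k%:R.
  move=> _; have [xA|xNA] := boolP (x \in A).
    by rewrite marg_mem // divr_ge0 ?ler0n.
  by move: xNA; rewrite inE; apply: stream_rejected_marg.
have := gain_setU_le_card f_mono f_submod _ _ margO.
have : #|O|%:R * (f A / k%:R) <= k%:R * (f A / k%:R).
  by rewrite ler_wpM2r ?ler_nat ?divr_ge0 ?ler0n.
have : f O <= f (O :|: A) by rewrite f_mono ?subsetUl.
by rewrite natk_divK; lra.
Qed.

Lemma stream_added_le_output (s : seq T) :
  f [set x in added s] <= 2%:R * f (stream_output f k s).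
Proof.
rewrite /stream_output; set L := added s.
have [small|large] := leqP (size L) k.
  have -> : (size L - k = 0)%N by apply/eqP; rewrite subn_eq0.
  by rewrite drop0; have := f_ge0 [set x in L]; lra.
set j := (size L - k)%N.
have j_add_k : (j + k = size L)%N by rewrite subnK // ltnW.
have growth : f [set x in take j L] <= f [set x in L] - f [set x in take j L].
  have := @relative_growth R (fun i => f [set x in take i L]) k%:R^-1 j k.
  rewrite /= j_add_k take_size natk_divK; apply=> //; first by rewrite invr_ge0.
  by move=> i /andP[_]; exact: stream_added_gain.
have := gain_setU_antitone f_mono f_submod [set x in drop j L]
  (sub0set [set x in take j L]).
rewrite -set_take_drop setU0; have := f_ge0 set0; lra.
Qed.

End Stream.

Theorem theorem4 (R : realFieldType) (T : finType) (f : {set T} -> R)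
  (k : nat) (s : seq T) (O : {set T}) :
  (forall S, 0 <= f S) ->
  monotone_fn f -> submodular f ->
  (1 <= k)%N ->
  uniq s -> (forall x : T, x \in s) ->
  (#|O| <= k)%N -> (forall S : {set T}, (#|S| <= k)%N -> f S <= f O) ->
  f O <= 4%:R * f (stream_output f k s).
Proof.
move=> f_ge0 f_mono f_submod k_gt0 _ s_all O_le_k _.
have := stream_added_two_approx k f_mono f_submod f_ge0 k_gt0 s O s_all O_le_k.
have := stream_added_le_output k f_mono f_submod f_ge0 k_gt0 s.
lra.
Qed.
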